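(* Let $G$ be a reduced strongly co-Hopfian abelian group with torsion subgroup $T=\bigoplus_p T_p$. Then each $T_p$ is finite, and $G\cong \hat G$ for some subgroup $\hat G$ with $T\le \hat G\le \prod_p T_p$ (where $T$ is identified with $\bigoplus_p T_p\le\prod_p T_p$) such that $\hat G/T$ is torsion-free and divisible. In particular, if infinitely many $T_p$ are non-zero, $G$ is an sp-group.
   Context: All groups are abelian. A group $G$ is strongly co-Hopfian if for every endomorphism $f$ of $G$ there is $n\in\mathbb N$ with $f^n(G)=f^{n+1}(G)$. $T$ denotes the maximal torsion subgroup of $G$ and $T_p$ its $p$-primary component. A mixed group $G$ with infinitely many non-zero $p$-components $T_p$ is an sp-group if $G$ is (isomorphic to) a pure subgroup of $\prod_p T_p$ containing $\bigoplus_p T_p$. *)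

From mathcomp Require Import all_boot all_order all_algebra.
Set Implicit Arguments.
Unset Strict Implicit.
Unset Printing Implicit Defensive.
Import GRing.Theory.
Local Open Scope ring_scope.

Section AbGroups.
Variable G : zmodType.

Definition is_endo (f : G -> G) : Prop := forall x y, f (x + y) = f x + f y.

Definition strongly_coHopfian : Prop :=
  forall f : G -> G, is_endo f ->
    exists n : nat, forall y : G,
      (exists x, iter n f x = y) <-> (exists x, iter n.+1 f x = y).

Definition is_subgroup (D : G -> Prop) : Prop :=
  D 0 /\ (forall x y, D x -> D y -> D (x + y)) /\ (forall x, D x -> D (- x)).

Definition divisible_sub (D : G -> Prop) : Prop :=
  forall d (n : nat), D d -> (0 < n)%N -> exists e, D e /\ e *+ n = d.

Definition reduced : Prop :=
  forall D, is_subgroup D -> divisible_sub D -> forall x, D x -> x = 0.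

Definition torsion (x : G) : Prop := exists n : nat, (0 < n)%N /\ x *+ n = 0.
Definition p_comp (p : nat) (x : G) : Prop := exists k : nat, x *+ (p ^ k) = 0.

Definition finite_set (A : G -> Prop) : Prop :=
  exists s : seq G, forall x, A x -> x \in s.

Definition infinitely_many_Tp : Prop :=
  forall N : nat, exists p : nat, (N < p)%N /\ prime p /\
    exists x, p_comp p x /\ x != 0.

(* The product  prod_p T_p  is modelled as the functions v : nat -> G with
   v p in T_p for primes p and v n = 0 for non-primes n, with pointwise
   operations. *)
Definition in_prodT (v : nat -> G) : Prop :=
  (forall p, prime p -> p_comp p (v p)) /\ (forall n, ~~ prime n -> v n = 0).

(* the direct sum  (+)_p T_p  inside the product: finitely supported elements *)
Definition fin_supp (v : nat -> G) : Prop :=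
  exists N : nat, forall n, (N <= n)%N -> v n = 0.

Definition in_sumT (v : nat -> G) : Prop := in_prodT v /\ fin_supp v.

(* phi : G -> prod_p T_p is an injective homomorphism (so G is isomorphic
   to its image  Ghat = phi(G)  ). *)
Definition embeds_into_prodT (phi : G -> nat -> G) : Prop :=
  (forall x, in_prodT (phi x)) /\
  (forall x y n, phi (x + y) n = phi x n + phi y n) /\
  (forall x y, (forall n, phi x n = phi y n) -> x = y).

Definition image_contains_sumT (phi : G -> nat -> G) : Prop :=
  forall v, in_sumT v -> exists x, forall n, phi x n = v n.

(* phi(G) / (+)_p T_p is torsion-free *)
Definition quotient_torsion_free (phi : G -> nat -> G) : Prop :=
  forall x (m : nat), (0 < m)%N ->
    fin_supp (fun n => phi x n *+ m) -> fin_supp (phi x).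

(* phi(G) / (+)_p T_p is divisible *)
Definition quotient_divisible (phi : G -> nat -> G) : Prop :=
  forall x (m : nat), (0 < m)%N ->
    exists y, fin_supp (fun n => phi y n *+ m - phi x n).

Definition image_pure (phi : G -> nat -> G) : Prop :=
  forall x (m : nat), (0 < m)%N ->
    (exists v, in_prodT v /\ forall n, v n *+ m = phi x n) ->
    exists y, forall n, phi y n *+ m = phi x n.

Definition sp_group : Prop :=
  infinitely_many_Tp /\
  exists phi, embeds_into_prodT phi /\ image_contains_sumT phi /\ image_pure phi.

End AbGroups.

(* For a prime p, multiplication by p is an endomorphism, so strong co-Hopficity
   gives N with p^N G = p^(N+1) G.  This stable image is p-divisible, so its
   p-torsion is a divisible subgroup and vanishes because G is reduced; hence
   G = G[p^N] (+) p^N G and T_p = G[p^N] is a bounded direct summand.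
   A summand S bounded by p^(k+1) is finite.  Choose greedily x_0, x_1, ... in S
   with p^k x_j outside the span of the earlier p^k x_i.  If the choice never
   stops, the x_j span a copy of (+) Z/p^(k+1), which is injective over
   Z/p^(k+1) (Baer's criterion and Zorn's lemma) and hence a summand; the shift
   x_j |-> x_(j+1) after the projection onto it is an endomorphism whose
   iterated images never stabilise.  If it stops, the x_j span a finite summand
   with a complement bounded by p^k, and we induct on k.
   Finally x |-> (x_p)_p, with x_p the T_p-component of x, embeds G in the
   product of the T_p: its kernel, the intersection of the p^N G, is divisible
   and thus zero; its image contains the direct sum of the T_p; and modulo that
   sum the image is torsion-free and divisible, because x is congruent modulo
   T_p to an element of p^N G = p^(N+1) G. *)

From mathcomp Require Import all_boot all_order all_algebra.
From mathcomp Require classical_sets.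
From Stdlib Require Import Classical ClassicalEpsilon Wf_nat.
Set Implicit Arguments.
Unset Strict Implicit.
Unset Printing Implicit Defensive.
Import GRing.Theory.
Local Open Scope ring_scope.

Lemma exists_least (P : nat -> Prop) :
  (exists n, P n) -> exists2 m, P m & forall i, (i < m)%N -> ~ P i.
Proof.
move=> exP; have [m [[Pm minm] _]] :=
  dec_inh_nat_subset_has_unique_least_element P (fun n => classic (P n)) exP.
exists m => // i ltim Pi; move: ltim; rewrite ltnNge => /negP; apply.
exact/leP/minm.
Qed.

Lemma prime_mul_ind (P : nat -> Prop) :
  P 1%N -> (forall q n, prime q -> P n -> P (q * n)%N) ->
  forall n, (0 < n)%N -> P n.
Proof.
move=> P1 PqM; elim/ltn_ind=> n IH n_gt0.
have [n_le1|n_gt1] := leqP n 1.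
  by have -> : n = 1%N by apply/eqP; rewrite eqn_leq n_le1.
have q_pr := pdiv_prime n_gt1.
rewrite -(divnK (pdiv_dvd n)) mulnC; apply: PqM => //.
apply: IH; first exact: ltn_Pdiv (prime_gt1 q_pr) n_gt0.
by rewrite divn_gt0 ?prime_gt0 // dvdn_leq // pdiv_dvd.
Qed.

Section Multiples.
Variable G : zmodType.
Implicit Types (x y : G) (D : G -> Prop) (f : G -> G) (u : nat -> G).

Lemma mulrn_dvd_eq0 x m k : x *+ m = 0 -> (m %| k)%N -> x *+ k = 0.
Proof. by move=> xm /dvdnP[q ->]; rewrite mulnC mulrnA xm mul0rn. Qed.

Lemma mulrn_coprime_eq0 x a b : coprime a b -> x *+ a = 0 -> x *+ b = 0 -> x = 0.
Proof.
move=> /eqP cop_ab xa xb; case: (posnP a) => [a0|a_gt0].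
  by rewrite -[x]mulr1n -cop_ab a0 gcd0n.
have [t _ /dvdnP[q def_q]] := Bezoutl b a_gt0.
have : x *+ (gcdn a b + t * b) = 0.
  by rewrite def_q (mulrn_dvd_eq0 xa) // dvdn_mull.
by rewrite mulrnDr (mulrn_dvd_eq0 xb (dvdn_mull t (dvdnn b))) addr0 cop_ab.
Qed.

Lemma mulrn_coprime_div x a n : coprime a n -> x *+ a = 0 -> exists m, x *+ m *+ n = x.
Proof.
case: (posnP n) => [->|n_gt0].
  by rewrite /coprime gcdn0 => /eqP->; exists 0%N; rewrite mulr0n.
move=> /eqP cop_an xa; case: (egcdnP a n_gt0) => ka kn def_g _.
exists ka; rewrite -mulrnA def_g mulrnDr gcdnC cop_an.
by rewrite (mulrn_dvd_eq0 xa) ?add0r // dvdn_mull.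
Qed.

Lemma mulrn_prime_small_eq0 x q a m :
  prime q -> x *+ q ^ a = 0 -> x *+ m = 0 -> (0 < m < q)%N -> x = 0.
Proof.
move=> q_pr xq xm /andP[m_gt0 lt_mq]; apply: (mulrn_coprime_eq0 _ xq xm).
apply: coprimeXl; rewrite prime_coprime //; apply/negP => /(dvdn_leq m_gt0).
by rewrite leqNgt lt_mq.
Qed.

Lemma oppr_mulrn_pred x q : (0 < q)%N -> x *+ q = 0 -> - x = x *+ q.-1.
Proof. by move=> q_gt0 xq; apply/eqP; rewrite eq_sym -addr_eq0 -mulrSr prednK // xq. Qed.

Lemma subgroup_mulrn D x k : is_subgroup D -> D x -> D (x *+ k).
Proof.
move=> [D0 [DD _]] Dx; elim: k => [|k IH]; first by rewrite mulr0n.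
by rewrite mulrS; apply: DD.
Qed.

Lemma mulrn_kernel_subgroup n : is_subgroup (fun x : G => x *+ n = 0).
Proof.
split; first exact: mul0rn.
by split=> [x y xn yn|x xn]; rewrite ?mulrnDl ?mulNrn ?xn ?yn ?addr0 ?oppr0.
Qed.

Lemma prime_divisible D :
  (forall q d, prime q -> D d -> exists e, D e /\ e *+ q = d) -> divisible_sub D.
Proof.
move=> Dq d n Dd n_gt0; move: n n_gt0 d Dd.
apply: (@prime_mul_ind (fun n => forall d, D d -> exists e, D e /\ e *+ n = d)).
  by move=> d Dd; exists d.
move=> q n q_pr IH d /IH[e1 [De1 <-]]; have [e [De <-]] := Dq q e1 q_pr De1.
by exists e; rewrite mulrnA.
Qed.

Lemma endo0 f : is_endo f -> f 0 = 0.
Proof. by move=> fD; apply: (addrI (f 0)); rewrite -fD !addr0. Qed.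

Lemma endoN f : is_endo f -> forall x, f (- x) = - f x.
Proof. by move=> fD x; apply: (addrI (f x)); rewrite -fD !subrr endo0. Qed.

Lemma endoB f : is_endo f -> forall x y, f (x - y) = f x - f y.
Proof. by move=> fD x y; rewrite fD endoN. Qed.

Lemma endoMn f : is_endo f -> forall x k, f (x *+ k) = f x *+ k.
Proof.
by move=> fD x; elim=> [|k IH]; rewrite ?endo0 // !mulrS fD IH.
Qed.

Lemma endo_sum f : is_endo f -> forall u M,
  f (\sum_(0 <= j < M) u j) = \sum_(0 <= j < M) f (u j).
Proof.
move=> fD u; elim=> [|M IH]; first by rewrite !big_geq ?endo0.
by rewrite !big_nat_recr //= fD IH.
Qed.

Definition nat_span u M y := exists a : nat -> nat, y = \sum_(0 <= j < M) u j *+ a j.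

Lemma subgroup_nat_span D u M y : is_subgroup D ->
  (forall j, (j < M)%N -> D (u j)) -> nat_span u M y -> D y.
Proof.
move=> sgD Du [a ->]; have [D0 [DD _]] := sgD.
elim: M Du => [|M IH] Du; first by rewrite big_geq.
rewrite big_nat_recr //=; apply: DD; first by apply: IH => j ltjM; apply: Du; exact: leqW.
by apply: subgroup_mulrn => //; apply: Du.
Qed.

Lemma nat_span_subgroup u M n : (0 < n)%N -> (forall j, (j < M)%N -> u j *+ n = 0) ->
  is_subgroup (nat_span u M).
Proof.
move=> n_gt0 un; split; first by exists (fun=> 0%N); rewrite big1 // => j _.
split=> [_ _ [a ->] [b ->]|_ [a ->]].
  by exists (fun j => a j + b j)%N; rewrite -big_split; apply: eq_bigr => j _; rewrite mulrnDr.
have spann : (\sum_(0 <= j < M) u j *+ a j) *+ n = 0.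
  apply: (subgroup_nat_span (mulrn_kernel_subgroup n)) un _.
  by exists a.
exists (fun j => a j * n.-1)%N; rewrite (oppr_mulrn_pred n_gt0 spann) -sumrMnl.
by apply: eq_bigr => j _; rewrite mulrnA.
Qed.

Lemma eq_nat_span u v M y :
  (forall j, (j < M)%N -> u j = v j) -> nat_span u M y -> nat_span v M y.
Proof. by move=> uv [a ->]; exists a; apply: eq_big_nat => j /andP[_ /uv->]. Qed.

Lemma finite_set_sub (A B : G -> Prop) :
  finite_set A -> (forall x, B x -> A x) -> finite_set B.
Proof. by move=> [s As] BA; exists s => x /BA/As. Qed.

Lemma finite_set_add (A C B : G -> Prop) : finite_set A -> finite_set C ->
  (forall x, B x -> exists a c, [/\ A a, C c & x = a + c]) -> finite_set B.
Proof.
move=> [sa As] [sc Cs] BAC; exists [seq a + c | a <- sa, c <- sc].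
by move=> x /BAC[a [c [/As a_sa /Cs c_sc ->]]]; apply: allpairs_f.
Qed.

Lemma finite_nat_span u M n : (0 < n)%N ->
  (forall j, (j < M)%N -> u j *+ n = 0) -> finite_set (nat_span u M).
Proof.
move=> n_gt0; elim: M => [|M IH] un.
  by exists [:: 0] => _ [a ->]; rewrite big_geq ?mem_head.
have uMn : u M *+ n = 0 := un M (ltnSn M).
have cycM : finite_set (fun y => exists j, y = u M *+ j).
  exists [seq u M *+ j | j <- iota 0 n] => _ [j ->].
  rewrite {1}(divn_eq j n) mulrnDr (mulrn_dvd_eq0 uMn (dvdn_mull _ (dvdnn n))) add0r.
  by apply: map_f; rewrite mem_iota ltn_pmod.
apply: finite_set_add (IH (fun j ltjM => un j (leqW ltjM))) cycM _ => _ [a ->].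
by rewrite big_nat_recr //=; do 2 eexists; split; [exists a | exists (a M) |].
Qed.

Lemma sum_pad u (a : nat -> nat) M K : (M <= K)%N ->
  \sum_(0 <= j < M) u j *+ a j =
  \sum_(0 <= j < K) u j *+ (if (j < M)%N then a j else 0%N).
Proof.
move=> le_MK; rewrite [RHS](big_cat_nat (leq0n M) le_MK) /=.
have -> : \sum_(M <= j < K) u j *+ (if (j < M)%N then a j else 0%N) = 0.
  by rewrite big_nat_cond big1 // => j /andP[/andP[le_Mj _] _]; rewrite ltnNge le_Mj.
by rewrite addr0; apply: eq_big_nat => j /andP[_ ->].
Qed.

Lemma nat_span_widen u M K y : (M <= K)%N -> nat_span u M y -> nat_span u K y.
Proof. by move=> le_MK [a ->]; rewrite (sum_pad _ _ le_MK); eexists. Qed.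

Lemma sum_delta u i : \sum_(0 <= j < i.+1) u j *+ (j == i) = u i.
Proof.
rewrite big_nat_recr //= eqxx mulr1n big_nat_cond big1 ?add0r // => j.
by case/andP=> /andP[_ /ltn_eqF->].
Qed.

End Multiples.

(** * Baer's criterion over Z/p^n *)

Section BaerRetract.
Variable G : zmodType.
Implicit Types (S B : G -> Prop) (X : G * G -> Prop) (x y a b c : G).

Definition retract S (pi : G -> G) :=
  [/\ is_endo pi, forall x, S (pi x) & forall s, S s -> pi s = s].

Definition bounded_by S n := forall s, S s -> s *+ n = 0.

Lemma retract_subgroup S pi : retract S pi -> is_subgroup S.
Proof.
move=> [piD piS pi_id]; split; first by rewrite -(endo0 piD).
split=> [x y Sx Sy|x Sx]; first by rewrite -(pi_id x) // -(pi_id y) // -piD.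
by rewrite -(pi_id x) // -(endoN piD).
Qed.

Lemma retract_complement S pi B rho : retract S pi -> retract B rho ->
  (forall b, B b -> S b) -> retract (fun s => S s /\ rho s = 0) (fun x => pi x - rho (pi x)).
Proof.
move=> retS [rhoD rhoB rho_id] BS; have [_ [SD SN]] := retract_subgroup retS.
case: retS => piD piS pi_id; split.
- by move=> x y; rewrite piD rhoD opprD addrACA.
- move=> x; split; first by apply: SD (piS x) (SN _ (BS _ (rhoB _))).
  by rewrite (endoB rhoD) (rho_id _ (rhoB _)) subrr.
- by move=> s [Ss rs0]; rewrite pi_id // rs0 subr0.
Qed.

Variables (p n : nat).
Hypothesis p_pr : prime p.

(* Baer's criterion for [B] as a module over Z/p^n: [B] is then injective. *)
Definition baer_cond B := forall b m, B b -> (m <= n)%N ->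
  b *+ p ^ (n - m) = 0 -> exists c, B c /\ c *+ p ^ m = b.

Variables S B : G -> Prop.
Hypotheses (sgS : is_subgroup S) (bS : bounded_by S (p ^ n)).
Hypotheses (sgB : is_subgroup B) (BS : forall b, B b -> S b) (baerB : baer_cond B).

Definition partial_retract X :=
  [/\ forall a b c, X (a, b) -> X (a, c) -> b = c,
      forall a b, X (a, b) -> S a /\ B b,
      forall a b a' b', X (a, b) -> X (a', b') -> X (a + a', b + b') &
      forall b, B b -> X (b, b)].

Lemma bounded_opp_mulrn y k : S y -> - (y *+ k) = y *+ (k * (p ^ n).-1).
Proof.
move=> Sy; rewrite mulrnA; apply: oppr_mulrn_pred; first by rewrite expn_gt0 prime_gt0.
by rewrite mulrnAC bS ?mul0rn.
Qed.

Lemma partial_retract_mulrn X a b k : partial_retract X -> X (a, b) -> X (a *+ k, b *+ k).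
Proof.
move=> [_ _ add_X diag_X] Xab; elim: k => [|k IH].
  by rewrite !mulr0n; apply: diag_X; case: sgB.
by rewrite !mulrS; apply: add_X.
Qed.

Lemma partial_retract_opp X a b : partial_retract X -> X (a, b) -> X (- a, - b).
Proof.
move=> retX Xab; have [_ XSB _ _] := retX; have [Sa /BS Sb] := XSB _ _ Xab.
by rewrite -[a]mulr1n -[b]mulr1n !bounded_opp_mulrn //; apply: partial_retract_mulrn.
Qed.

(* The empty relation is admitted so that Zorn's lemma also covers the empty chain. *)
Lemma partial_retract_bigcup (F : (G * G -> Prop) -> Prop) :
  (forall X, F X -> (forall t, ~ X t) \/ partial_retract X) ->
  (forall X Y, F X -> F Y -> (forall t, X t -> Y t) \/ (forall t, Y t -> X t)) ->
  (forall t, ~ exists2 X, F X & X t) \/ partial_retract (fun t => exists2 X, F X & X t).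
Proof.
move=> FP Ftot.
case: (classic (exists X t, F X /\ X t)) => [[X0 [t0 [FX0 X0t0]]]|none]; last first.
  by left=> t [X FX Xt]; apply: none; exists X, t.
have retF X t : F X -> X t -> partial_retract X.
  by move=> FX Xt; case: (FP X FX) => // /(_ t Xt).
right; split.
- move=> a b c [X FX Xab] [Y FY Yac]; have [XY|YX] := Ftot X Y FX FY.
    by case: (retF Y _ FY Yac) => fun_Y _ _ _; exact: fun_Y (XY _ Xab) Yac.
  by case: (retF X _ FX Xab) => fun_X _ _ _; exact: fun_X Xab (YX _ Yac).
- by move=> a b [X FX Xab]; case: (retF X _ FX Xab) => _ + _ _; apply.
- move=> a b a' b' [X FX Xab] [Y FY Ya'b']; have [XY|YX] := Ftot X Y FX FY.
    by exists Y => //; case: (retF Y _ FY Ya'b') => _ _ + _; apply; first exact: XY.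
  by exists X => //; case: (retF X _ FX Xab) => _ _ + _; apply; last exact: YX.
- by move=> b Bb; exists X0 => //; case: (retF X0 _ FX0 X0t0) => _ _ _; apply.
Qed.

(* The ideal of multipliers [k] with [x *+ k] in the domain of [X] is generated
   by [p ^ m]; this forces the value of [X] at every multiple of [x]. *)
Lemma partial_retract_forced X x m c : partial_retract X -> S x ->
  X (x *+ p ^ m, c *+ p ^ m) -> (forall v, (v < m)%N -> ~ exists b, X (x *+ p ^ v, b)) ->
  forall k b, X (x *+ k, b) -> b = c *+ k.
Proof.
move=> retX Sx Xm minm k b Xk; have [fun_X _ add_X diag_X] := retX.
have [B0 _] := sgB; have pm_gt0 : (0 < p ^ m)%N by rewrite expn_gt0 prime_gt0.
have Xr : X (x *+ (k %% p ^ m), b - c *+ (k %/ p ^ m * p ^ m)).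
  have Xq := partial_retract_mulrn (k %/ p ^ m) retX Xm.
  rewrite -!mulrnA [(p ^ m * _)%N]mulnC in Xq.
  have := add_X _ _ _ _ Xk (partial_retract_opp retX Xq).
  by rewrite {1}(divn_eq k (p ^ m)) mulrnDr addrAC subrr add0r.
case: (posnP (k %% p ^ m)) => [r0|r_gt0].
  rewrite r0 mulr0n in Xr; have /eqP := fun_X _ _ _ Xr (diag_X 0 B0).
  by rewrite subr_eq0 => /eqP->; rewrite {2}(divn_eq k (p ^ m)) r0 addn0.
have [r' cop_r' def_r] := pfactor_coprime p_pr r_gt0.
set v := logn p _ in def_r.
have ltvm : (v < m)%N.
  rewrite -(ltn_exp2l _ _ (prime_gt1 p_pr)) (leq_ltn_trans _ (ltn_pmod k pm_gt0)) //.
  by apply: dvdn_leq => //; rewrite def_r dvdn_mull.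
case: (minm v ltvm).
have xvn : x *+ p ^ v *+ p ^ n = 0 by rewrite mulrnAC bS // mul0rn.
have [u def_u] := mulrn_coprime_div (coprimeXl n cop_r') xvn.
exists ((b - c *+ (k %/ p ^ m * p ^ m)) *+ u); rewrite -def_u -!mulrnA.
have := partial_retract_mulrn u retX Xr; rewrite def_r -!mulrnA.
by rewrite [(u * r')%N]mulnC mulnCA mulnA.
Qed.

Definition adjoin X x c (t : G * G) := let: (a', b') := t in
  exists a b k, [/\ X (a, b), a' = a + x *+ k & b' = b + c *+ k].

Lemma partial_retract_adjoin X x c : partial_retract X -> S x -> B c ->
  (forall k b, X (x *+ k, b) -> b = c *+ k) -> partial_retract (adjoin X x c).
Proof.
move=> retX Sx Bc forced; have [fun_X XSB add_X diag_X] := retX.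
have [_ [SD _]] := sgS; have [_ [BD _]] := sgB.
split.
- move=> a _ _ [a1 [b1 [k1 [X1 def_a1 ->]]]] [a2 [b2 [k2 [X2 def_a2 ->]]]].
  have := forced (k1 + k2 * (p ^ n).-1)%N (b2 - b1).
  rewrite !mulrnDr -!bounded_opp_mulrn //; last exact: BS.
  suff -> : x *+ k1 - x *+ k2 = a2 - a1.
    move=> /(_ (add_X _ _ _ _ X2 (partial_retract_opp retX X1)))/eqP.
    by rewrite subr_eq => /eqP->; rewrite addrAC subrK addrC.
  by apply/eqP; rewrite subr_eq addrAC -def_a2 def_a1 addrAC subrr add0r.
- move=> _ _ [a [b [k [Xab -> ->]]]]; have [Sa Bb] := XSB _ _ Xab.
  by split; [apply: SD Sa (subgroup_mulrn _ sgS Sx) | apply: BD Bb (subgroup_mulrn _ sgB Bc)].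
- move=> _ _ _ _ [a [b [k [Xab -> ->]]]] [a' [b' [k' [Xab' -> ->]]]].
  exists (a + a'), (b + b'), (k + k')%N.
  by split; [exact: add_X | rewrite mulrnDr addrACA ..].
- by move=> b Bb; exists b, b, 0%N; split; [exact: diag_X | rewrite mulr0n addr0 ..].
Qed.

Lemma partial_retract_extend X x : partial_retract X -> S x -> ~ (exists b, X (x, b)) ->
  exists2 Y, partial_retract Y & (forall t, X t -> Y t) /\ ~ (forall t, Y t -> X t).
Proof.
move=> retX Sx xX; have [fun_X XSB _ diag_X] := retX; have [B0 _] := sgB.
have X0 : X (0, 0) := diag_X 0 B0.
have exn : exists m, exists b, X (x *+ p ^ m, b) by exists n, 0; rewrite bS.
have [m [h Xmh] minm] := exists_least exn.
have le_mn : (m <= n)%N.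
  by rewrite leqNgt; apply/negP => ltnm; apply: (minm n ltnm); exists 0; rewrite bS.
have hn0 : h *+ p ^ (n - m) = 0.
  have := partial_retract_mulrn (p ^ (n - m)) retX Xmh.
  by rewrite -mulrnA -expnD subnKC // bS // => /fun_X; apply.
have [c [Bc def_h]] := baerB (XSB _ _ Xmh).2 le_mn hn0.
rewrite -def_h in Xmh; have forced := partial_retract_forced retX Sx Xmh minm.
exists (adjoin X x c); first exact: partial_retract_adjoin.
split=> [[a b] Xab|XxcX]; first by exists a, b, 0%N; split; rewrite //= mulr0n addr0.
by apply: xX; exists c; apply: XxcX; exists 0, 0, 1%N; split; rewrite //= !add0r.
Qed.

Lemma baer_retract pi : retract S pi -> exists rho, retract B rho.
Proof.
move=> [piD piS pi_id]; have [B0 [BD _]] := sgB.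
have [X [PX maxX]] := classical_sets.Zorn_bigcup
  (P := fun X => (forall t, ~ X t) \/ partial_retract X) (@partial_retract_bigcup).
have retX : partial_retract X.
  case: PX => // emptyX; case: (maxX (fun '(a, b) => B a /\ b = a)).
    by split=> [t /emptyX //|/(_ (0, 0) (conj B0 erefl))/emptyX].
  right; split=> [a b c [_ ->] [_ ->] //|a b [Ba ->]|a b a' b' [Ba ->] [Ba' ->]|b Bb] //=.
    by split=> //; apply: BS.
  by split=> //; apply: BD.
have dom_X x : S x -> exists b, X (x, b).
  move=> Sx; apply: NNPP => xX; have [Y retY [XY YX]] := partial_retract_extend retX Sx xX.
  by apply: (maxX Y); [split | right].
pose rho x := epsilon (inhabits 0) (fun b => X (pi x, b)).
have Xrho x : X (pi x, rho x).
  by apply: (epsilon_spec (inhabits 0) (fun b => X (pi x, b))); exact: dom_X.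
have [fun_X XSB add_X diag_X] := retX; exists rho; split.
- by move=> x y; apply: (fun_X _ _ _ (Xrho (x + y))); rewrite piD; apply: add_X.
- by move=> x; exact: (XSB _ _ (Xrho x)).2.
- by move=> b Bb; apply: (fun_X _ _ _ (Xrho b)); rewrite pi_id; [exact: diag_X | exact: BS].
Qed.

End BaerRetract.

(** * Bounded summands of a strongly co-Hopfian group are finite *)

Section BoundedRetract.
Variables (G : zmodType) (p : nat).
Hypothesis p_pr : prime p.
Variables (S : G -> Prop) (pi : G -> G) (k : nat).
Hypotheses (piS : retract S pi) (bS : bounded_by S (p ^ k.+1)).
Implicit Types (x : nat -> G) (y s : G).

Local Notation top s := (s *+ p ^ k).
Local Notation tops x := (fun j => x j *+ p ^ k).

Let sgS := retract_subgroup piS.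
Let pk1_gt0 : (0 < p ^ k.+1)%N. Proof. by rewrite expn_gt0 prime_gt0. Qed.

Lemma top_mulp_eq0 s : S s -> top s *+ p = 0.
Proof. by move=> Ss; rewrite -mulrnA -expnSr bS. Qed.

Definition fresh x j := S (x j) /\ ~ nat_span (tops x) j (top (x j)).

Definition fresh_upto x M := forall j, (j < M)%N -> fresh x j.

Lemma fresh_upto_S x M : fresh_upto x M -> forall j, (j < M)%N -> S (x j).
Proof. by move=> freshM j /freshM[]. Qed.

Lemma fresh_upto_bounded x M : fresh_upto x M -> forall j, (j < M)%N -> x j *+ p ^ k.+1 = 0.
Proof. by move=> freshM j /(fresh_upto_S freshM)/bS. Qed.

Lemma tops_indep x M c : fresh_upto x M ->
  \sum_(0 <= j < M) top (x j) *+ c j = 0 -> forall j, (j < M)%N -> (p %| c j)%N.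
Proof.
elim: M => [//|M IH] freshM; rewrite big_nat_recr //= => sum0 j.
have freshM' : fresh_upto x M by move=> i ltiM; apply/freshM/leqW.
have [SxM newM] := freshM M (ltnSn M).
have sump : (\sum_(0 <= i < M) top (x i) *+ c i) *+ p = 0.
  apply: (subgroup_nat_span (mulrn_kernel_subgroup _ p)); last by exists c.
  by move=> i /(fresh_upto_S freshM')/top_mulp_eq0.
have [dvd_cM|ndvd_cM] := boolP (p %| c M)%N.
  rewrite (mulrn_dvd_eq0 (top_mulp_eq0 SxM) dvd_cM) addr0 in sum0.
  by rewrite ltnS leq_eqVlt => /orP[/eqP->//|]; exact: IH.
have cop : coprime p (c M) by rewrite prime_coprime.
have [u def_u] := mulrn_coprime_div cop (top_mulp_eq0 SxM).
case: newM; exists (fun i => c i * p.-1 * u)%N; rewrite -def_u mulrnAC.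
have -> : top (x M) *+ c M = - \sum_(0 <= i < M) top (x i) *+ c i.
  by apply/eqP; rewrite -addr_eq0 addrC sum0 eqxx.
rewrite (oppr_mulrn_pred (prime_gt0 p_pr) sump) -!sumrMnl.
by apply: eq_bigr => i _; rewrite !mulrnA.
Qed.

Lemma pow_dvd_coef x M a m : fresh_upto x M -> (m <= k.+1)%N ->
  (\sum_(0 <= j < M) x j *+ a j) *+ p ^ (k.+1 - m) = 0 ->
  forall j, (j < M)%N -> (p ^ m %| a j)%N.
Proof.
move=> freshM; elim: m => [|m IH] le_mk sum0 j ltjM; first by rewrite expn0 dvd1n.
have dvd_m : forall i, (i < M)%N -> (p ^ m %| a i)%N.
  apply: IH; first exact: ltnW.
  by rewrite subSn // expnSr mulrnA -subSS sum0 mul0rn.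
have : \sum_(0 <= i < M) top (x i) *+ (a i %/ p ^ m) = 0.
  rewrite -[in RHS]sum0 subSS -sumrMnl; apply: eq_big_nat => i /andP[_ ltiM].
  by rewrite -{2}(divnK (dvd_m i ltiM)) -!mulrnA -mulnA -expnD subnKC // mulnC.
move=> /(tops_indep freshM)/(_ j ltjM) dvd_q.
by rewrite -(divnK (dvd_m j ltjM)) expnS dvdn_mul.
Qed.

Lemma coef_eq x M a b : fresh_upto x M ->
  \sum_(0 <= j < M) x j *+ a j = \sum_(0 <= j < M) x j *+ b j ->
  forall j, (j < M)%N -> forall y, y *+ p ^ k.+1 = 0 -> y *+ a j = y *+ b j.
Proof.
move=> freshM eq_ab j ltjM y yP.
have sumbP : (\sum_(0 <= i < M) x i *+ b i) *+ p ^ k.+1 = 0.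
  apply: (subgroup_nat_span (mulrn_kernel_subgroup _ _)) (fresh_upto_bounded freshM) _.
  by exists b.
(* With natural coefficients, [a - b] is encoded as [a + b * (p ^ k.+1 - 1)]. *)
have sum0 : (\sum_(0 <= i < M) x i *+ (a i + b i * (p ^ k.+1).-1)%N) *+ p ^ (k.+1 - k.+1) = 0.
  rewrite subnn expn0 mulr1n; under eq_bigr do rewrite mulrnDr mulrnA.
  by rewrite big_split /= sumrMnl -(oppr_mulrn_pred pk1_gt0 sumbP) eq_ab subrr.
have := mulrn_dvd_eq0 yP (pow_dvd_coef freshM (leqnn _) sum0 ltjM).
rewrite mulrnDr mulrnA -(oppr_mulrn_pred pk1_gt0) => [/eqP|]; last by rewrite mulrnAC yP mul0rn.
by rewrite addr_eq0 opprK => /eqP.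
Qed.

Lemma nat_span_baer x M : fresh_upto x M -> baer_cond p k.+1 (nat_span x M).
Proof.
move=> freshM _ m [a ->] le_mk sum0; have dvd_a := pow_dvd_coef freshM le_mk sum0.
exists (\sum_(0 <= j < M) x j *+ (a j %/ p ^ m)); split; first by eexists.
rewrite -sumrMnl; apply: eq_big_nat => j /andP[_ ltjM].
by rewrite -mulrnA divnK // dvd_a.
Qed.

Lemma top_spanned_reduce x M : fresh_upto x M ->
    (forall s, S s -> nat_span (tops x) M (top s)) ->
  exists (S' : G -> Prop) (pi' : G -> G),
    [/\ retract S' pi', bounded_by S' (p ^ k) & (finite_set S' -> finite_set S)].
Proof.
move=> freshM spanned; have BS := subgroup_nat_span sgS (fresh_upto_S freshM).
have sgB := nat_span_subgroup pk1_gt0 (fresh_upto_bounded freshM).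
have [rho retB] := baer_retract p_pr sgS bS sgB BS (nat_span_baer freshM) piS.
have [rhoD rhoB rho_id] := retB.
exists (fun s => S s /\ rho s = 0), (fun y => pi y - rho (pi y)); split.
- exact: retract_complement piS retB BS.
- move=> s [Ss rs0]; have [c def_c] := spanned s Ss.
  pose b := \sum_(0 <= j < M) x j *+ c j.
  have Bb : nat_span x M (top b) by apply: subgroup_mulrn sgB _; exists c.
  have def_top : top s = top b.
    by rewrite def_c /b -sumrMnl; apply: eq_bigr => j _; rewrite mulrnAC.
  by rewrite def_top -(rho_id _ Bb) -def_top (endoMn rhoD) rs0 mul0rn.
- move=> finS'; have finB := finite_nat_span pk1_gt0 (fresh_upto_bounded freshM).
  apply: finite_set_add finB finS' _ => s Ss; exists (rho s), (s - rho s).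
  split; [exact: rhoB | | by rewrite addrC subrK].
  have [_ [SD SN]] := sgS; split; first by apply: SD Ss (SN _ (BS _ (rhoB s))).
  by rewrite (endoB rhoD) (rho_id _ (rhoB s)) subrr.
Qed.

Section FreshSequence.
Variable x : nat -> G.
Hypothesis xfresh : forall j, fresh x j.

Let freshM M : fresh_upto x M := fun j _ => xfresh j.
Let x_bounded j : x j *+ p ^ k.+1 = 0 := bS (xfresh j).1.

Lemma coef_eq_pad M a M' a' :
    \sum_(0 <= j < M) x j *+ a j = \sum_(0 <= j < M') x j *+ a' j ->
  forall j y, y *+ p ^ k.+1 = 0 ->
  y *+ (if (j < M)%N then a j else 0%N) = y *+ (if (j < M')%N then a' j else 0%N).
Proof.
move=> eq_sums j y yP; have [ltjK|leKj] := ltnP j (M + M')%N.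
  apply: (coef_eq (a := fun j => if (j < M)%N then a j else 0%N)
    (b := fun j => if (j < M')%N then a' j else 0%N) (@freshM (M + M')%N) _ ltjK yP).
  by rewrite -(sum_pad _ _ (leq_addr M' M)) -(sum_pad _ _ (leq_addl M M')).
by rewrite !ifN // -leqNgt (leq_trans _ leKj) ?leq_addl ?leq_addr.
Qed.

Definition represents y (Ma : nat * (nat -> nat)) :=
  y = \sum_(0 <= j < Ma.1) x j *+ Ma.2 j.

(* By [coef_eq_pad], the value does not depend on the chosen representation. *)
Definition shift y := let: (M, a) := epsilon (inhabits (0%N, fun=> 0%N)) (represents y) in
  \sum_(0 <= j < M) x j.+1 *+ a j.

Lemma shift_sum M a : shift (\sum_(0 <= j < M) x j *+ a j) = \sum_(0 <= j < M) x j.+1 *+ a j.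
Proof.
have := epsilon_spec (inhabits (0%N, fun=> 0%N)) (represents (\sum_(0 <= j < M) x j *+ a j))
  (ex_intro _ (M, a) erefl).
rewrite /shift; case: (epsilon _ (represents _)) => M' a' /= eq_sums.
rewrite (sum_pad _ _ (leq_addl M M')) (sum_pad _ _ (leq_addr M' M)).
by apply: eq_bigr => j _; rewrite (coef_eq_pad eq_sums j (x_bounded j.+1)).
Qed.

Lemma shift_x i : shift (x i) = x i.+1.
Proof. by rewrite -[x i](sum_delta x) shift_sum (sum_delta (fun j => x j.+1)). Qed.

Definition span_all y := exists M, nat_span x M y.

Lemma span_all_subgroup : is_subgroup span_all.
Proof.
have sg M := nat_span_subgroup pk1_gt0 (fresh_upto_bounded (@freshM M)).
split; first by exists 0%N; case: (sg 0%N).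
split=> [y z [M yM] [M' zM']|y [M yM]]; last by exists M; case: (sg M) => _ [_]; apply.
exists (M + M')%N; case: (sg (M + M')%N) => _ [+ _]; apply.
  exact: nat_span_widen (leq_addr M' M) yM.
exact: nat_span_widen (leq_addl M M') zM'.
Qed.

Lemma span_all_S y : span_all y -> S y.
Proof. by move=> [M]; apply: subgroup_nat_span sgS (fresh_upto_S (@freshM M)). Qed.

Lemma span_all_baer : baer_cond p k.+1 span_all.
Proof.
move=> b m [M bM] le_mk bm; have [c [cM def_b]] := nat_span_baer (@freshM M) bM le_mk bm.
by exists c; split; first exists M.
Qed.

Lemma shift_add y z : span_all y -> span_all z -> shift (y + z) = shift y + shift z.
Proof.
move=> [M yM] [M' zM'].
have [a ->] := nat_span_widen (leq_addr M' M) yM.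
have [b ->] := nat_span_widen (leq_addl M M') zM'.
rewrite -big_split /=; under eq_bigr do rewrite -mulrnDr.
by rewrite !shift_sum -big_split; apply: eq_bigr => j _; rewrite mulrnDr.
Qed.

Definition tail_span i y := exists M (a : nat -> nat),
  (forall j, (j < i)%N -> a j = 0%N) /\ y = \sum_(0 <= j < M) x j *+ a j.

Lemma shift_tail i y : tail_span i y -> tail_span i.+1 (shift y).
Proof.
move=> [M [a [a0 ->]]]; rewrite shift_sum.
exists M.+1, (fun j => if j is j'.+1 then a j' else 0%N); split=> [[|j] // /a0 //|].
by rewrite big_nat_recl //= mulr0n add0r.
Qed.

Lemma notin_tail i : ~ tail_span i.+1 (x i).
Proof.
move=> [M [a [a0 def_xi]]].
have eq_sums : \sum_(0 <= j < M) x j *+ a j = \sum_(0 <= j < i.+1) x j *+ (j == i).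
  by rewrite sum_delta -def_xi.
have := coef_eq_pad eq_sums i (x_bounded i).
rewrite a0 // ltnSn eqxx if_same mulr0n mulr1n => xi0.
case: (xfresh i) => _; apply; exists (fun=> 0%N).
by rewrite -xi0 mul0rn big1 // => j _; rewrite mulr0n.
Qed.

Hypothesis hco : strongly_coHopfian G.

(* [f := shift \o rho] maps [x i] to [x i.+1] while [f ^ i.+1] lands in the
   span of the [x j] with [j > i], so no power of [f] has a stable image. *)
Lemma fresh_sequence_absurd : False.
Proof.
have [rho [rhoD rhoB rho_id]] :=
  baer_retract p_pr sgS bS span_all_subgroup span_all_S span_all_baer piS.
pose f y := shift (rho y).
have fD : is_endo f by move=> y z; rewrite /f rhoD shift_add.
have f_x i : f (x i) = x i.+1.
  by rewrite /f rho_id ?shift_x //; exists i.+1, (fun j => (j == i) : nat); rewrite sum_delta.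
have iter_x i : iter i f (x 0) = x i by elim: i => //= i ->; rewrite f_x.
have iter_tail i y : tail_span i.+1 (iter i.+1 f y).
  elim: i => [|i IH]; first by case: (rhoB y) => M [a def_y]; apply: shift_tail; exists M, a.
  have [M [a [_ def_z]]] := IH.
  by rewrite /= /f rho_id; [exact: shift_tail | exists M, a].
have [N stableN] := hco fD.
have [/(_ (ex_intro _ (x 0) (iter_x N)))[y def_y] _] := stableN (x N).
by apply: (@notin_tail N); rewrite -def_y; exact: iter_tail.
Qed.

End FreshSequence.

Definition greedy_next (l : seq G) := epsilon (inhabits 0) (fun s =>
  S s /\ ~ nat_span (fun j => top (nth 0 l j)) (size l) (top s)).

Fixpoint greedy_prefix i :=
  if i is i'.+1 then rcons (greedy_prefix i') (greedy_next (greedy_prefix i')) else [::].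

Definition greedy j := greedy_next (greedy_prefix j).

Lemma greedy_fresh j : (exists s, S s /\ ~ nat_span (tops greedy) j (top s)) -> fresh greedy j.
Proof.
have prefixE : greedy_prefix j = mkseq greedy j.
  by elim: j => //= j IH; rewrite mkseqS -IH.
have span_prefix y :
    nat_span (fun i => top (nth 0 (greedy_prefix j) i)) (size (greedy_prefix j)) y <->
    nat_span (tops greedy) j y.
  by rewrite prefixE size_mkseq; split; apply: eq_nat_span => i ltij; rewrite nth_mkseq.
move=> [s [Ss new_s]].
have [] := epsilon_spec (inhabits 0) (fun s => S s /\
  ~ nat_span (fun i => top (nth 0 (greedy_prefix j) i)) (size (greedy_prefix j)) (top s)).
  by exists s; split=> // /span_prefix.
by move=> Sg new_g; split=> // /span_prefix.
Qed.

Lemma bounded_retract_reduce : strongly_coHopfian G ->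
  exists (S' : G -> Prop) (pi' : G -> G),
    [/\ retract S' pi', bounded_by S' (p ^ k) & (finite_set S' -> finite_set S)].
Proof.
move=> hco; case: (classic (exists M, ~ fresh greedy M)) => [exM|all_fresh]; last first.
  case: (@fresh_sequence_absurd greedy) => // j.
  by apply: NNPP => notj; apply: all_fresh; exists j.
have [M notM minM] := exists_least exM.
apply: (@top_spanned_reduce greedy M) => [j ltjM|s Ss]; first exact: NNPP (minM j ltjM).
by apply: NNPP => new_s; apply: notM; apply: greedy_fresh; exists s.
Qed.

End BoundedRetract.

Lemma bounded_retract_finite (G : zmodType) p n (S : G -> Prop) pi :
  prime p -> strongly_coHopfian G -> retract S pi -> bounded_by S (p ^ n) -> finite_set S.
Proof.
move=> p_pr hco; elim: n S pi => [|k IH] S pi piS bS.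
  by exists [:: 0] => s /bS; rewrite expn0 mulr1n => ->; rewrite mem_head.
have [S' [pi' [piS' bS' finS]]] := bounded_retract_reduce p_pr piS bS hco.
exact/finS/(IH S' pi').
Qed.

(** * The primary components and the embedding into their product *)

Section ReducedCoHopfian.
Variable G : zmodType.
Hypotheses (hred : reduced G) (hco : strongly_coHopfian G).
Implicit Types (x y h t : G).

Definition stable_exp p : nat := epsilon (inhabits 0%N) (fun n =>
  forall y : G, (exists x, x *+ p ^ n = y) <-> (exists x, x *+ p ^ n.+1 = y)).

Definition stable_image p y := exists x, x *+ p ^ stable_exp p = y.

Definition stable_part p x := epsilon (inhabits 0) (fun h =>
  stable_image p h /\ h *+ p ^ stable_exp p = x *+ p ^ stable_exp p).

Definition pcomp_proj p x := x - stable_part p x.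

Section Primary.
Variable p : nat.
Local Notation N := (stable_exp p).

Lemma stable_image_subgroup : is_subgroup (stable_image p).
Proof.
split; first by exists 0; rewrite mul0rn.
split=> [_ _ [x <-] [y <-]|_ [x <-]]; first by exists (x + y); rewrite mulrnDl.
by exists (- x); rewrite mulNrn.
Qed.

Lemma stable_expP y : (exists x, x *+ p ^ N = y) <-> (exists x, x *+ p ^ N.+1 = y).
Proof.
move: y; apply: (epsilon_spec (inhabits 0%N) (fun n => forall y : G,
  (exists x, x *+ p ^ n = y) <-> (exists x, x *+ p ^ n.+1 = y))).
have [|n stable_n] := hco (f := fun x => x *+ p); first by move=> x y; rewrite mulrnDl.
have iterE m x : iter m (fun x => x *+ p) x = x *+ p ^ m.
  by elim: m => //= m ->; rewrite -mulrnA expnSr.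
exists n => y; have [to_succ to_n] := stable_n y; split=> -[x def_y].
  by have [|x' ?] := to_succ; [exists x; rewrite iterE | exists x'; rewrite -iterE].
by have [|x' ?] := to_n; [exists x; rewrite iterE | exists x'; rewrite -iterE].
Qed.

Lemma stable_image_exp_add j y : stable_image p y -> exists x, x *+ p ^ (N + j) = y.
Proof.
elim: j y => [|j IH] y; first by rewrite addn0.
move=> /IH[x <-]; have [/(_ (ex_intro _ x erefl))[x' def_x'] _] := stable_expP (x *+ p ^ N).
by exists x'; rewrite addnS -addSn !expnD !mulrnA def_x'.
Qed.

Lemma stable_image_pdiv h : stable_image p h -> exists e, stable_image p e /\ e *+ p = h.
Proof.
move=> /(stable_image_exp_add 1)[x <-]; exists (x *+ p ^ N); split; first by exists x.
by rewrite addn1 expnSr mulrnA.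
Qed.

Hypothesis p_pr : prime p.

Lemma stable_image_ptorsion_eq0 y k : stable_image p y -> y *+ p ^ k = 0 -> y = 0.
Proof.
pose D y := stable_image p y /\ exists k, y *+ p ^ k = 0.
suff D_0 : forall y, D y -> y = 0 by move=> img_y yk; apply: D_0; split; last exists k.
have [img0 [imgD imgN]] := stable_image_subgroup.
apply: hred.
  split; first by split=> //; exists 0%N; rewrite mul0rn.
  split=> [x z [img_x [k1 xk]] [img_z [k2 zk]]|x [img_x [k1 xk]]]; split; auto.
    exists (k1 + k2)%N; rewrite mulrnDl (mulrn_dvd_eq0 xk) ?(mulrn_dvd_eq0 zk) ?addr0 //.
      by rewrite dvdn_exp2l // leq_addl.
    by rewrite dvdn_exp2l // leq_addr.
  by exists k1; rewrite mulNrn xk oppr0.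
apply: prime_divisible => q d q_pr [img_d [k1 dk]].
have [->|neq_qp] := eqVneq q p.
  have [e [img_e de]] := stable_image_pdiv img_d; exists e; split=> //; split=> //.
  by exists k1.+1; rewrite expnS mulrnA de.
have cop : coprime (p ^ k1) q.
  by apply: coprimeXl; rewrite prime_coprime // dvdn_prime2 // eq_sym.
have [m dm] := mulrn_coprime_div cop dk.
exists (d *+ m); split=> //; split; first exact: subgroup_mulrn stable_image_subgroup img_d.
by exists k1; rewrite mulrnAC dk mul0rn.
Qed.

Lemma ptorsion_stable x k : x *+ p ^ k = 0 -> x *+ p ^ N = 0.
Proof.
move=> xk; apply: (@stable_image_ptorsion_eq0 _ k); first by exists x.
by rewrite mulrnAC xk mul0rn.
Qed.

Lemma stable_partP x :
  stable_image p (stable_part p x) /\ stable_part p x *+ p ^ N = x *+ p ^ N.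
Proof.
apply: (epsilon_spec (inhabits 0) (fun h => stable_image p h /\ h *+ p ^ N = x *+ p ^ N)).
have [|g def_g] := @stable_image_exp_add N (x *+ p ^ N); first by exists x.
by exists (g *+ p ^ N); split; [exists g | rewrite -mulrnA -expnD].
Qed.

Lemma stable_part_unique x h :
  stable_image p h -> h *+ p ^ N = x *+ p ^ N -> stable_part p x = h.
Proof.
move=> img_h hN; have [img_x xN] := stable_partP x.
have [_ [imgD imgN]] := stable_image_subgroup.
apply/eqP; rewrite -subr_eq0; apply/eqP.
apply: (@stable_image_ptorsion_eq0 _ N); first exact: imgD (imgN _ _).
by rewrite mulrnBl xN hN subrr.
Qed.

Lemma pcomp_proj_endo : is_endo (pcomp_proj p).
Proof.
move=> x y; have [_ [imgD _]] := stable_image_subgroup.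
rewrite /pcomp_proj (@stable_part_unique (x + y) (stable_part p x + stable_part p y)).
- by rewrite opprD addrACA.
- by apply: imgD; [case: (stable_partP x) | case: (stable_partP y)].
by rewrite !mulrnDl (stable_partP x).2 (stable_partP y).2.
Qed.

Lemma pcomp_proj_stable x : pcomp_proj p x *+ p ^ N = 0.
Proof. by rewrite mulrnBl (stable_partP x).2 subrr. Qed.

Lemma pcomp_proj_id x : x *+ p ^ N = 0 -> pcomp_proj p x = x.
Proof.
move=> xN; rewrite /pcomp_proj (@stable_part_unique x 0) ?subr0 ?mul0rn ?xN //.
by case: stable_image_subgroup.
Qed.

Lemma pcomp_proj_pcomp x : p_comp p x -> pcomp_proj p x = x.
Proof. by move=> [k xk]; apply: pcomp_proj_id; exact: ptorsion_stable xk. Qed.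

Lemma pcomp_proj_eq0 x : pcomp_proj p x = 0 <-> stable_image p x.
Proof.
split=> [/eqP|img_x]; last by rewrite /pcomp_proj (stable_part_unique img_x) ?subrr.
by rewrite subr_eq0 => /eqP->; case: (stable_partP x).
Qed.

Lemma pcomp_proj_qcomp q t k : prime q -> q != p -> t *+ q ^ k = 0 -> pcomp_proj p t = 0.
Proof.
move=> q_pr neq_qp tk; apply: (@mulrn_coprime_eq0 _ _ (p ^ N) (q ^ k)).
- by apply: coprimeXl; apply: coprimeXr; rewrite prime_coprime // dvdn_prime2 // eq_sym.
- exact: pcomp_proj_stable.
by rewrite -(endoMn pcomp_proj_endo) tk (endo0 pcomp_proj_endo).
Qed.

End Primary.

Lemma pcomp_finite p : prime p -> finite_set (p_comp (G:=G) p).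
Proof.
move=> p_pr; have retT : retract (fun x => x *+ p ^ stable_exp p = 0) (pcomp_proj p).
  by split; [exact: pcomp_proj_endo | exact: pcomp_proj_stable | exact: pcomp_proj_id].
apply: finite_set_sub (bounded_retract_finite p_pr hco retT (fun s => id)) _ => x [k xk].
exact: ptorsion_stable xk.
Qed.

Definition pcomp_embed x (n : nat) : G := if prime n then pcomp_proj n x else 0.

Lemma pcomp_embed_endo n : is_endo (fun x => pcomp_embed x n).
Proof.
by move=> x y; rewrite /pcomp_embed; case: ifP => n_pr; rewrite ?(pcomp_proj_endo n_pr) ?addr0.
Qed.

Lemma pcomp_embedMnB x y m n :
  pcomp_embed (y *+ m - x) n = pcomp_embed y n *+ m - pcomp_embed x n.
Proof. by rewrite (endoB (pcomp_embed_endo n)) (endoMn (pcomp_embed_endo n)). Qed.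

Lemma pcomp_embed_prodT x : in_prodT (pcomp_embed x).
Proof.
split=> [q q_pr|n /negbTE n_npr]; last by rewrite /pcomp_embed n_npr.
by rewrite /pcomp_embed q_pr; exists (stable_exp q); exact: pcomp_proj_stable.
Qed.

Lemma stable_images_eq0 z : (forall q, prime q -> stable_image q z) -> z = 0.
Proof.
move=> img_z; pose K z := forall q, prime q -> stable_image q z.
apply: (hred (D := K) _ _ img_z).
  split; first by move=> q _; case: (stable_image_subgroup q).
  split=> [z1 z2 img1 img2|z1 img1] q q_pr; have [_ [imgD imgN]] := stable_image_subgroup q.
    exact: imgD (img1 q q_pr) (img2 q q_pr).
  exact: imgN (img1 q q_pr).
apply: prime_divisible => q d q_pr img_d.
have [e [img_e def_d]] := stable_image_pdiv (img_d q q_pr).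
exists e; split=> // r r_pr; have [->//|neq_rq] := eqVneq r q.
have eq0 : pcomp_proj r e *+ q = 0.
  by rewrite -(endoMn (pcomp_proj_endo r_pr)) def_d; apply/(pcomp_proj_eq0 r_pr)/img_d.
apply/(pcomp_proj_eq0 r_pr)/(mulrn_coprime_eq0 _ (pcomp_proj_stable r e) eq0).
by apply: coprimeXl; rewrite prime_coprime // dvdn_prime2.
Qed.

Lemma pcomp_embed_inj x y : (forall n, pcomp_embed x n = pcomp_embed y n) -> x = y.
Proof.
move=> eq_xy; apply/eqP; rewrite -subr_eq0; apply/eqP/stable_images_eq0 => q q_pr.
apply/(pcomp_proj_eq0 q_pr); have := eq_xy q; rewrite /pcomp_embed q_pr => eq_q.
by rewrite (endoB (pcomp_proj_endo q_pr)) eq_q subrr.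
Qed.

Lemma pcomp_embed_embeds : embeds_into_prodT pcomp_embed.
Proof.
split; first exact: pcomp_embed_prodT.
by split; [move=> x y n; exact: pcomp_embed_endo | exact: pcomp_embed_inj].
Qed.

Lemma torsion_fin_supp t r : (0 < r)%N -> t *+ r = 0 -> fin_supp (pcomp_embed t).
Proof.
move=> r_gt0 tr; exists r.+1 => n lt_rn; rewrite /pcomp_embed; case: ifP => // n_pr.
have tr' : pcomp_proj n t *+ r = 0.
  by rewrite -(endoMn (pcomp_proj_endo n_pr)) tr (endo0 (pcomp_proj_endo n_pr)).
by apply: mulrn_prime_small_eq0 n_pr (pcomp_proj_stable n t) tr' _; rewrite r_gt0.
Qed.

Lemma pcomp_embed_contains : image_contains_sumT pcomp_embed.
Proof.
move=> v [[v_pcomp v_npr] [N v_supp]]; exists (\sum_(0 <= i < N) v i) => n.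
have embed_v i : pcomp_embed (v i) n = if i == n then v n else 0.
  rewrite /pcomp_embed; case: (eqVneq i n) => [->|neq_in]; case: ifP => n_pr //.
  - exact: pcomp_proj_pcomp n_pr _ (v_pcomp n n_pr).
  - by rewrite v_npr ?n_pr.
  case i_pr: (prime i); last by rewrite v_npr ?i_pr // (endo0 (pcomp_proj_endo n_pr)).
  have [c vc] := v_pcomp i i_pr; exact: (pcomp_proj_qcomp n_pr i_pr neq_in vc).
have := endo_sum (pcomp_embed_endo n) v N; rewrite /= => ->.
rewrite (eq_bigr _ (fun i _ => embed_v i)) -big_mkcond big_nat1_eq.
by case: ifP => //= lt_nN; rewrite v_supp // leqNgt lt_nN.
Qed.

Lemma pcomp_embed_tf : quotient_torsion_free pcomp_embed.
Proof.
move=> x m m_gt0 [N supp]; exists (N + m.+1)%N => n le_n.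
rewrite /pcomp_embed; case: ifP => // n_pr.
have := supp n (leq_trans (leq_addr _ _) le_n); rewrite /pcomp_embed n_pr => xm.
apply: mulrn_prime_small_eq0 n_pr (pcomp_proj_stable n x) xm _.
by rewrite m_gt0 (leq_trans _ le_n) // leq_addl.
Qed.

Lemma divisible_mod_torsion m x : (0 < m)%N -> exists y r, (0 < r)%N /\ (y *+ m - x) *+ r = 0.
Proof.
move=> m_gt0; move: m m_gt0 x.
apply: (@prime_mul_ind (fun m => forall x, exists y r, (0 < r)%N /\ (y *+ m - x) *+ r = 0)).
  by move=> x; exists x, 1%N; rewrite subrr mul0rn.
move=> q m q_pr IH x; have [e [_ def_e]] := stable_image_pdiv (stable_partP q x).1.
have [y [r [r_gt0 yr]]] := IH e.
exists y, (r * q ^ stable_exp q)%N; split; first by rewrite muln_gt0 r_gt0 expn_gt0 prime_gt0.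
have -> : y *+ (q * m) - x = (y *+ m - e) *+ q - pcomp_proj q x.
  by rewrite mulnC mulrnA mulrnBl def_e /pcomp_proj opprB addrA subrK.
rewrite mulrnBl mulrnAC mulrnA yr !mul0rn sub0r mulnC mulrnA.
by rewrite (pcomp_proj_stable q) mul0rn oppr0.
Qed.

Lemma pcomp_embed_div : quotient_divisible pcomp_embed.
Proof.
move=> x m m_gt0; have [y [r [r_gt0 tor]]] := divisible_mod_torsion x m_gt0.
have [N supp] := torsion_fin_supp r_gt0 tor; exists y, N => n le_Nn.
by rewrite -pcomp_embedMnB supp.
Qed.

Lemma pcomp_embed_pure : image_pure pcomp_embed.
Proof.
move=> x m m_gt0 [v [[v_pcomp v_npr] def_v]].
have [y0 [r [r_gt0 tor]]] := divisible_mod_torsion x m_gt0.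
have [N supp] := torsion_fin_supp r_gt0 tor.
pose w n := v n - pcomp_embed y0 n.
have w_prodT : in_prodT w.
  split=> [q q_pr|n n_npr]; last by rewrite /w v_npr // (pcomp_embed_prodT y0).2 ?subrr.
  have [a va] := v_pcomp q q_pr; have [b yb] := (pcomp_embed_prodT y0).1 q q_pr.
  exists (a + b)%N; rewrite /w mulrnBl expnD !mulrnA va mul0rn mulrnAC yb mul0rn subrr //.
have w_supp : fin_supp w.
  exists (N + m.+1)%N => n le_n.
  have wm : w n *+ m = 0.
    rewrite /w mulrnBl def_v -opprB -pcomp_embedMnB supp ?oppr0 //.
    exact: leq_trans (leq_addr _ _) le_n.
  case n_pr: (prime n); last by apply: w_prodT.2; rewrite n_pr.
  have [c wc] := w_prodT.1 n n_pr.
  apply: mulrn_prime_small_eq0 n_pr wc wm _.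
  by rewrite m_gt0 (leq_trans _ le_n) // leq_addl.
have [z def_z] := pcomp_embed_contains (conj w_prodT w_supp).
exists (y0 + z) => n; rewrite (pcomp_embed_endo n) def_z /w addrC subrK; exact: def_v.
Qed.

End ReducedCoHopfian.

Theorem mainTheorem3 (G : zmodType) :
  reduced G -> strongly_coHopfian G ->
  (forall p : nat, prime p -> finite_set (p_comp (G:=G) p)) /\
  (exists phi : G -> nat -> G,
      embeds_into_prodT phi /\ image_contains_sumT phi /\
      quotient_torsion_free phi /\ quotient_divisible phi) /\
  (infinitely_many_Tp G -> sp_group G).
Proof.
move=> hred hco; split; first exact: pcomp_finite.
have embeds := pcomp_embed_embeds hred hco.
have contains := pcomp_embed_contains hred hco.
split.
  exists (@pcomp_embed G); split=> //; split=> //.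
  by split; [exact: pcomp_embed_tf | exact: pcomp_embed_div].
by move=> infTp; split=> //; exists (@pcomp_embed G); do 2 split=> //; exact: pcomp_embed_pure.
Qed.
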